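(* In generalized non-signalling theory (box world), a measurement $M=\{(r,\mu_r)\}$ on a system of boxes is maximally informative if and only if every effect $\mu_r$ can be represented by a vector with exactly one non-zero entry, that entry lying between $0$ and $1$.
   Context: Box world (GNST): a box has a finite set of inputs $x$ and outputs $a$. A system of $n$ boxes has states $\mathbf{p}$ given by all collections $p(\mathbf{a}|\mathbf{x})=p(a_1,\ldots,a_n|x_1,\ldots,x_n)\ge 0$ with $\sum_{\mathbf{a}}p(\mathbf{a}|\mathbf{x})=1$ for all $\mathbf{x}$ and satisfying no-signalling: for each $i$, $\sum_{a_i}p(\mathbf{a}|\mathbf{x})$ does not depend on $x_i$. An effect is any linear map $\mu$ from states to $[0,1]$; a vector $\mathbf{R}$ indexed by pairs $(\mathbf{a},\mathbf{x})$ represents $\mu$ if $\mu(\mathbf{p})=\sum_{\mathbf{a},\mathbf{x}}p(\mathbf{a}|\mathbf{x})R(\mathbf{a}|\mathbf{x})$ for all states. A measurement is a finite set $\{(r,\mu_r)\}$ of outcomes and effects with $\sum_r\mu_r$ equal to the constant map $1$; all such are allowed. A measurement $N=\{(s,\nu_s)\}$ refines $M=\{(r,\mu_r)\}$ if the outcome set of $N$ can be partitioned into sets $P_r$ with $\mu_r=\sum_{s\in P_r}\nu_s$ for each $r$; the refinement is trivial if $\nu_s$ is proportional to $\mu_r$ whenever $s\in P_r$. $M$ is maximally informative if it has no non-trivial refinement. *)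

From HB Require Import structures.
From mathcomp Require Import all_boot all_order all_algebra.
From mathcomp Require Import reals.
Set Implicit Arguments. Unset Strict Implicit. Unset Printing Implicit Defensive.
Import Order.TTheory GRing.Theory Num.Theory.
Local Open Scope ring_scope.

(* A system of [n] boxes; box [i] has finite input set [X i] and output set [A i]. *)
Definition ins (n : nat) (X : 'I_n -> finType) : finType :=
  {dffun forall i : 'I_n, X i}.
Definition outs (n : nat) (A : 'I_n -> finType) : finType :=
  {dffun forall i : 'I_n, A i}.

(* Vectors indexed by pairs (a, x); states p(a|x) are such vectors. *)
Definition boxvec (R : realType) (n : nat) (X A : 'I_n -> finType) :=
  outs A -> ins X -> R.

(* No-signalling: for each i, sum_{a_i} p(a|x) does not depend on x_i. *)
Definition no_signalling (R : realType) n (X A : 'I_n -> finType)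
    (p : boxvec R X A) : Prop :=
  forall (i : 'I_n) (a : outs A) (x x' : ins X),
    (forall j : 'I_n, j != i -> x j = x' j) ->
    \sum_(a' : outs A | [forall j : 'I_n, (j != i) ==> (a' j == a j)]) p a' x =
    \sum_(a' : outs A | [forall j : 'I_n, (j != i) ==> (a' j == a j)]) p a' x'.

Definition is_state (R : realType) n (X A : 'I_n -> finType)
    (p : boxvec R X A) : Prop :=
  [/\ (forall a x, 0 <= p a x),
      (forall x, \sum_(a : outs A) p a x = 1) &
      no_signalling p].

(* An effect: a map from states to [0,1] that is linear on states, i.e.
   preserves convex combinations of states (the state set is convex). *)
Definition is_effect (R : realType) n (X A : 'I_n -> finType)
    (mu : boxvec R X A -> R) : Prop :=
  (forall p, is_state p -> 0 <= mu p <= 1) /\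
  (forall (p q : boxvec R X A) (t : R), is_state p -> is_state q -> 0 <= t <= 1 ->
     mu (fun a x => t * p a x + (1 - t) * q a x) = t * mu p + (1 - t) * mu q).

Definition represents (R : realType) n (X A : 'I_n -> finType)
    (mu : boxvec R X A -> R) (Rv : boxvec R X A) : Prop :=
  forall p, is_state p ->
    mu p = \sum_(a : outs A) \sum_(x : ins X) p a x * Rv a x.

Definition is_measurement (R : realType) n (X A : 'I_n -> finType) (O : finType)
    (mu : O -> boxvec R X A -> R) : Prop :=
  (forall r, is_effect (mu r)) /\
  (forall p, is_state p -> \sum_(r : O) mu r p = 1).

(* [nu] refines [mu] via the partition of the outcomes of [nu] into the
   blocks P_r = f^{-1}(r). Equality of effects = equality as maps on states. *)
Definition refines_via (R : realType) n (X A : 'I_n -> finType) (O S : finType)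
    (mu : O -> boxvec R X A -> R) (nu : S -> boxvec R X A -> R) (f : S -> O) : Prop :=
  forall (r : O) p, is_state p -> mu r p = \sum_(s : S | f s == r) nu s p.

Definition trivial_refinement (R : realType) n (X A : 'I_n -> finType) (O S : finType)
    (mu : O -> boxvec R X A -> R) (nu : S -> boxvec R X A -> R) (f : S -> O) : Prop :=
  forall s : S, exists c : R, forall p, is_state p -> nu s p = c * mu (f s) p.

Definition max_informative (R : realType) n (X A : 'I_n -> finType) (O : finType)
    (mu : O -> boxvec R X A -> R) : Prop :=
  forall (S : finType) (nu : S -> boxvec R X A -> R) (f : S -> O),
    is_measurement nu -> refines_via mu nu f -> trivial_refinement mu nu f.

Definition one_entry_vec (R : realType) n (X A : 'I_n -> finType)
    (Rv : boxvec R X A) : Prop :=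
  exists (a : outs A) (x : ins X),
    [/\ Rv a x != 0, 0 <= Rv a x <= 1 &
        forall (a' : outs A) (x' : ins X), (a', x') != (a, x) -> Rv a' x' = 0].

From HB Require Import structures.
From mathcomp Require Import all_boot all_order all_algebra.
From mathcomp Require Import boolp reals ring lra.
Import Order.TTheory GRing.Theory Num.Theory.
Local Open Scope ring_scope.

Set Implicit Arguments. Unset Strict Implicit. Unset Printing Implicit Defensive.

(* An effect is an affine functional on the polytope of no-signalling states.
   If [mu r p = m * p(a|x)], every effect of a refinement of the outcome [r] is
   dominated by [mu r], hence vanishes on the face [p(a|x) = 0]; this face
   contains a state that is positive at every entry not tied to (a|x), and
   comparing mixtures with it shows that an effect vanishing on the face is a
   multiple of [p(a|x)]: the refinement is trivial.
   Conversely, a nonzero effect [mu] cannot vanish at a state of full support,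
   so its kernel lies in a face [p(a|x) = 0]; since the polytope has finitely
   many vertices, [c * p(a|x) <= mu p] for some [c > 0].  Splitting the outcome
   into [c * p(a|x)] and [mu - c * p(a|x)] refines the measurement, and this
   refinement is trivial only if [mu] is proportional to [p(a|x)]. *)

Section FiniteBounds.
Variables (R : realType) (T : finType).

Lemma pos_lower_bound (F : T -> R) :
  exists c, 0 < c /\ forall t, 0 < F t -> c <= F t.
Proof.
exists (\big[Num.min/1]_(t | 0 < F t) F t); split=> [|t Ft]; last exact: bigmin_le_cond.
elim/big_ind: _ => [|x y x0 y0|//]; first exact: ltr01.
by rewrite lt_min x0 y0.
Qed.

Lemma common_pos_bound (P : T -> R -> Prop) :
  (forall t, exists c, 0 < c /\ forall c', 0 < c' <= c -> P t c') ->
  exists c, 0 < c /\ forall t, P t c.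
Proof.
move=> /choice[c hc]; have [m [m0 hm]] := pos_lower_bound c.
exists m; split=> // t; have [ct0 hct] := hc t.
by apply: hct; rewrite m0 hm.
Qed.

End FiniteBounds.

Lemma sum_indicator (R : realType) (T : finType) (P : pred T) (g : T) :
  \sum_(b | P b) (if b == g then 1 else 0 : R) = if P g then 1 else 0.
Proof.
case: (boolP (P g)) => Pg.
  by rewrite (bigD1 g) //= eqxx big1 ?addr0 // => b /andP[_ /negbTE ->].
by apply: big1 => b Pb; case: eqP => // eb; rewrite -eb Pb in Pg.
Qed.

Lemma sum_unit (V : nmodType) (F : unit -> V) : \sum_(u : unit) F u = F tt.
Proof. by rewrite (big_pred1 tt) // => -[]. Qed.

Section States.
Variables (R : realType) (n : nat) (X A : 'I_n -> finType).
Local Notation vec := (boxvec R X A).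
Local Notation entry := (outs A * ins X)%type.

Definition mix (t : R) (p q : vec) : vec := fun a x => t * p a x + (1 - t) * q a x.

Lemma state_ge0 (p : vec) a x : is_state p -> 0 <= p a x.
Proof. by case=> h _ _; apply: h. Qed.

Lemma state_le1 (p : vec) a x : is_state p -> p a x <= 1.
Proof.
case=> h0 h1 _; rewrite -(h1 x) (bigD1 a) //= lerDl.
by apply: sumr_ge0 => b _; apply: h0.
Qed.

Lemma no_signalling_lin (p q : vec) (al be : R) :
  no_signalling p -> no_signalling q ->
  no_signalling (fun a x => al * p a x + be * q a x).
Proof.
move=> hp hq i a x x' hx.
by rewrite !big_split /= -!mulr_sumr (hp i a x x' hx) (hq i a x x' hx).
Qed.

Lemma state_lin (p q : vec) (al be : R) :
  is_state p -> is_state q -> al + be = 1 ->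
  (forall a x, 0 <= al * p a x + be * q a x) ->
  is_state (fun a x => al * p a x + be * q a x).
Proof.
move=> [_ hp1 hpn] [_ hq1 hqn] hab h0; split=> // [x|].
  by rewrite big_split /= -!mulr_sumr hp1 hq1 !mulr1.
exact: no_signalling_lin.
Qed.

Lemma state_mix (p q : vec) t :
  is_state p -> is_state q -> 0 <= t <= 1 -> is_state (mix t p q).
Proof.
move=> hp hq /andP[t0 t1]; apply: state_lin => // [|a x]; first by ring.
by rewrite addr_ge0 // mulr_ge0 // ?subr_ge0 // state_ge0.
Qed.

Lemma effect_ge0 (mu : vec -> R) p : is_effect mu -> is_state p -> 0 <= mu p.
Proof. by case=> h _ /h /andP[]. Qed.

Lemma effect_mix (mu : vec -> R) (p q : vec) t :
  is_effect mu -> is_state p -> is_state q -> 0 <= t <= 1 ->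
  mu (mix t p q) = t * mu p + (1 - t) * mu q.
Proof. by case=> _ h; apply: h. Qed.

Lemma effect_conic (mu : vec -> R) (p q w r : vec) (al be ga de : R) :
  is_effect mu -> is_state p -> is_state q -> is_state w -> is_state r ->
  0 <= al -> 0 <= ga -> 0 <= be -> 0 <= de -> 0 < al + ga -> al + ga = be + de ->
  (forall a x, al * p a x + ga * w a x = be * q a x + de * r a x) ->
  al * mu p + ga * mu w = be * mu q + de * mu r.
Proof.
move=> hmu hp hq hw hr al0 ga0 be0 de0 T0 hT hpw.
set T := al + ga in T0 hT.
have T_neq0 : T != 0 by rewrite gt_eqF.
have weight (u v : R) : 0 <= u -> 0 <= v -> u + v = T ->
    0 <= u / T <= 1 /\ 1 - u / T = v / T.
  move=> u0 v0 uvT; split; last by rewrite -uvT; field; rewrite uvT.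
  by rewrite divr_ge0 ?(ltW T0) //= ler_pdivrMr // mul1r; lra.
have [hal gaE] := weight al ga al0 ga0 erefl.
have [hbe deE] := weight be de be0 de0 (esym hT).
have mixE : mix (al / T) p w = mix (be / T) q r.
  apply: funext => a; apply: funext => x.
  rewrite /mix gaE deE.
  transitivity ((al * p a x + ga * w a x) / T); first by ring.
  by rewrite hpw; ring.
move: (congr1 mu mixE); rewrite !effect_mix // gaE deE => h.
apply: (mulIf (invr_neq0 T_neq0)).
transitivity (al / T * mu p + ga / T * mu w); first by ring.
by rewrite h; ring.
Qed.

Definition local_det (f : forall i, X i -> A i) : vec :=
  fun b y => if b == [ffun i => f i (y i)] then 1 else 0.

Lemma local_det_state f : is_state (local_det f).
Proof.
split=> [b y|y|i a y y' hy]; rewrite /local_det.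
- by case: ifP.
- by rewrite (sum_indicator _ predT).
rewrite !sum_indicator; congr (if _ then _ else _).
by apply: eq_forallb => j; case: (boolP (j != i)) => //= ji; rewrite !ffunE hy.
Qed.

Definition const_det (a : outs A) : vec := local_det (fun i _ => a i).

Lemma const_det_state a : is_state (const_det a).
Proof. exact: local_det_state. Qed.

Lemma const_det_at a x : const_det a a x = 1.
Proof.
by rewrite /const_det /local_det; case: eqP => // -[]; apply/ffunP => i; rewrite ffunE.
Qed.

Lemma no_signalling_switch_input (p : vec) (a : outs A) (y y' : ins X) i :
  no_signalling p -> (forall j, j != i -> y j = y' j) ->
  (y i != y' i -> forall c : A i, c = a i) -> p a y = p a y'.
Proof.
move=> hp hy hsing; case: (eqVneq (y i) (y' i)) => [yi|/hsing hA].
  congr (p a _); apply/ffunP => j; case: (eqVneq j i) => [->|/hy //]; exact: yi.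
have Heq (b : outs A) : [forall j, (j != i) ==> (b j == a j)] = (b == a).
  apply/forallP/eqP => [hb|->]; last by move=> j; rewrite eqxx implybT.
  apply/ffunP => j; case: (eqVneq j i) => [->|ji]; first exact: hA.
  by move: (hb j); rewrite ji => /eqP.
by have := hp i a y y' hy; rewrite !(eq_bigl _ _ Heq) !big_pred1_eq.
Qed.

Lemma no_signalling_const_outputs (p : vec) (a : outs A) (x x' : ins X) :
  no_signalling p -> (forall i, x i != x' i -> forall c : A i, c = a i) ->
  p a x = p a x'.
Proof.
move=> hp hsing.
pose y (m : nat) : ins X := [ffun i : 'I_n => if (i < m)%N then x' i else x i].
have y_step m (lt_mn : (m < n)%N) : p a (y m) = p a (y m.+1).
  apply: (no_signalling_switch_input (i := Ordinal lt_mn)) => // [j ji|].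
    rewrite !ffunE; have -> : (j < m.+1)%N = (nat_of_ord j == m) || (j < m)%N.
      by rewrite ltnS leq_eqVlt.
    suff /negbTE -> : nat_of_ord j != m by [].
    by apply: contra ji => /eqP e; apply/eqP/val_inj.
  by rewrite !ffunE /= ltnn ltnSn => /hsing.
have -> : x = y 0%N by apply/ffunP => i; rewrite ffunE.
have -> : x' = y n by apply/ffunP => i; rewrite ffunE ltn_ord.
suff y_path m : (m <= n)%N -> p a (y 0%N) = p a (y m) by exact: y_path.
by elim: m => [//|m IH] lt_mn; rewrite IH ?(ltnW lt_mn) // y_step.
Qed.

Definition tied (e k : entry) := forall p : vec, is_state p -> p k.1 k.2 = p e.1 e.2.

Lemma separating_local_det (a b : outs A) (x x' : ins X) i :
  (x' i == x i) && (b i != a i) || (x' i != x i) && [exists c, c != a i] ->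
  exists f, local_det f b x' = 1 /\ local_det f a x = 0.
Proof.
move=> hi; pose g j := odflt (a j) [pick c : A j | c != a j].
exists (fun j (y : X j) => if y == x' j then b j else g j); split; rewrite /local_det.
  by case: eqP => // -[]; apply/ffunP => j; rewrite ffunE eqxx.
case: eqP => // /ffunP /(_ i); rewrite ffunE eq_sym.
case/orP: hi => /andP[hx ha]; first by rewrite hx => abi; rewrite abi eqxx in ha.
rewrite (negbTE hx) /g; case: pickP => [c /= hc ac|none _]; first by rewrite ac eqxx in hc.
by case/existsP: ha => c; rewrite none.
Qed.

Lemma tied_of_inseparable (a b : outs A) (x x' : ins X) :
  (forall i, ~~ ((x' i == x i) && (b i != a i) ||
                 (x' i != x i) && [exists c, c != a i])) ->
  tied (a, x) (b, x').
Proof.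
move=> hno p hp /=.
have hsing i : x' i != x i -> forall c : A i, c = a i.
  move=> hx c; apply/eqP; apply: contraR (hno i) => hc.
  by apply/orP; right; rewrite hx; apply/existsP; exists c.
have -> : b = a.
  apply/ffunP => i; case: (eqVneq (x' i) (x i)) => [hx|/hsing h]; last exact: h.
  by apply/eqP; apply: contraR (hno i) => hba; rewrite hx eqxx hba.
symmetry; apply: no_signalling_const_outputs; first by case: hp.
by move=> i; rewrite eq_sym => /hsing.
Qed.

Lemma untied_local_det (e k : entry) : ~ tied e k ->
  exists f, local_det f k.1 k.2 = 1 /\ local_det f e.1 e.2 = 0.
Proof.
case: e k => a x [b x'] /= htied.
case: (boolP [exists i, (x' i == x i) && (b i != a i) ||
                        (x' i != x i) && [exists c, c != a i]]).
  by case/existsP => i; apply: separating_local_det.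
by move/existsPn => hno; case: htied; apply: tied_of_inseparable.
Qed.

Lemma convex_positive_witness (C : vec -> Prop) (P : entry -> Prop) :
  (forall p, C p -> is_state p) ->
  (forall p q, C p -> C q -> C (mix 2^-1 p q)) ->
  (exists u, C u) ->
  (forall k, P k -> exists u, C u /\ 0 < u k.1 k.2) ->
  exists w, C w /\ forall k, P k -> 0 < w k.1 k.2.
Proof.
move=> Cstate Cmix [u0 Cu0] hP.
suff [w [Cw hw]] : exists w, C w /\ forall k, k \in enum [set: entry] -> P k -> 0 < w k.1 k.2.
  by exists w; split=> // k; apply: hw; rewrite mem_enum inE.
elim: (enum _) => [|k l [w [Cw hw]]]; first by exists u0.
have [Pk|nPk] := pselect (P k); last first.
  by exists w; split=> // k'; rewrite inE => /orP[/eqP -> /nPk //|/hw].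
have [u [Cu uk]] := hP k Pk.
exists (mix 2^-1 w u); split; first exact: Cmix.
have w_ge0 k' := state_ge0 k'.1 k'.2 (Cstate w Cw).
have u_ge0 k' := state_ge0 k'.1 k'.2 (Cstate u Cu).
move=> k'; rewrite inE /mix => /orP[/eqP -> _|/hw hk' /hk' wk'].
  by have := w_ge0 k; lra.
by have := u_ge0 k'; lra.
Qed.

Lemma face_witness (e : entry) : (exists k, ~ tied e k) ->
  exists w : vec, (is_state w /\ w e.1 e.2 = 0) /\
                  forall k, ~ tied e k -> 0 < w k.1 k.2.
Proof.
have local_det_face k : ~ tied e k -> exists u : vec,
    (is_state u /\ u e.1 e.2 = 0) /\ 0 < u k.1 k.2.
  move=> /untied_local_det[f [fk fe]].
  by exists (local_det f); rewrite fk fe; split; [split; first exact: local_det_state|].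
case=> k0 /local_det_face[u0 [Cu0 _]].
apply: convex_positive_witness => // [p [] //|p q [hp pe] [hq qe]|].
  split; first by apply: state_mix => //; apply/andP; split; lra.
  by rewrite /mix pe qe; ring.
by exists u0.
Qed.

Lemma tied_all_state_unique (e : entry) (p q : vec) :
  (forall k, tied e k) -> is_state p -> is_state q -> p = q.
Proof.
move=> hall hp hq.
have count_e (z : vec) : is_state z -> #|outs A|%:R * z e.1 e.2 = 1.
  move=> hz; case: (hz) => [_ z1 _]; apply: etrans (z1 e.2).
  rewrite (eq_bigr (fun=> z e.1 e.2)) => [|b _]; first by rewrite sumr_const mulr_natl.
  exact: (hall (b, e.2) z hz).
have pq_e : p e.1 e.2 = q e.1 e.2.
  have N0 : #|outs A|%:R != 0 :> R.
    apply/eqP => N0; move: (count_e p hp).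
    by rewrite N0 mul0r => /eqP; rewrite eq_sym oner_eq0.
  by apply: (mulfI N0); rewrite !count_e.
apply: funext => a; apply: funext => x.
by rewrite (hall (a, x) p hp) (hall (a, x) q hq) pq_e.
Qed.

Lemma face_companion (e : entry) (p q w : vec) :
  is_state p -> is_state q -> is_state w -> w e.1 e.2 = 0 ->
  (forall k, ~ tied e k -> 0 < w k.1 k.2) ->
  exists (s : R) (r : vec),
    [/\ 0 < s, is_state r, r e.1 e.2 = 0, 0 < s + q e.1 e.2 - p e.1 e.2 &
    forall a x, q e.1 e.2 * p a x + s * w a x =
                p e.1 e.2 * q a x + (s + q e.1 e.2 - p e.1 e.2) * r a x].
Proof.
move=> hp hq hw we hpos.
have [c [c0 hc]] := pos_lower_bound (fun k : entry => w k.1 k.2).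
set pe := p e.1 e.2; set qe := q e.1 e.2.
have pe0 : 0 <= pe by apply: state_ge0.
have pe1 : pe <= 1 by apply: state_le1.
have qe0 : 0 <= qe by apply: state_ge0.
(* [s] is large enough for [s * w] to dominate [pe * q] off the entries tied
   to [e], where the first two terms of [r] below cancel. *)
pose s := c^-1 + 1; pose D := s + qe - pe.
have s0 : 0 < s by rewrite /s addr_gt0 ?invr_gt0.
have D0 : 0 < D by rewrite /D /s; have := invr_gt0 c; lra.
pose r : vec := fun a x => (qe * p a x - pe * q a x + s * w a x) / D.
have num_ge0 a x : 0 <= qe * p a x - pe * q a x + s * w a x.
  have [hk|/(hpos (a, x)) /= wk] := pselect (tied e (a, x)).
    by rewrite /= (hk p hp) (hk q hq) -/pe -/qe mulrC subrr add0r mulr_ge0 ?state_ge0 ?ltW.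
  have sc : s * c = 1 + c by rewrite /s mulrDl mulVf ?gt_eqF // mul1r.
  have := ler_wpM2l (ltW s0) (hc (a, x) wk); rewrite sc /= => sw.
  have := mulr_ile1 pe0 (state_ge0 a x hq) pe1 (state_le1 a x hq).
  have := mulr_ge0 qe0 (state_ge0 a x hp); lra.
have r_state : is_state r.
  case: hp hq hw => [_ hp1 hpn] [_ hq1 hqn] [_ hw1 hwn]; split.
  - by move=> a x; apply: divr_ge0; [exact: num_ge0 | exact: ltW].
  - move=> x; rewrite /r -mulr_suml !big_split /= sumrN -!mulr_sumr hp1 hq1 hw1.
    have -> : qe * 1 - pe * 1 + s * 1 = D by rewrite /D; ring.
    by rewrite divff ?gt_eqF.
  - move=> i a x x' hx; rewrite /r -!mulr_suml !big_split /= !sumrN -!mulr_sumr.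
    by rewrite (hpn i a x x' hx) (hqn i a x x' hx) (hwn i a x x' hx).
exists s, r; split=> // [|a x]; first by rewrite /r /= we -/pe -/qe; ring.
by rewrite /r /= -/pe -/qe -/D; field; rewrite gt_eqF.
Qed.

Lemma face_effect_proportional (nu : vec -> R) (e : entry) (p q : vec) :
  is_effect nu -> (forall z, is_state z -> z e.1 e.2 = 0 -> nu z = 0) ->
  is_state p -> is_state q -> q e.1 e.2 * nu p = p e.1 e.2 * nu q.
Proof.
move=> hnu hface hp hq.
have [untied|/forallNP all_tied] := pselect (exists k, ~ tied e k); last first.
  have hall k : tied e k by apply: contrapT; apply: all_tied.
  by rewrite (tied_all_state_unique hall hp hq) mulrC.
have [w [[hw we] hpos]] := face_witness untied.
have [s [r [s0 hr re D0 hid]]] := face_companion hp hq hw we hpos.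
have := effect_conic hnu hp hq hw hr _ _ _ _ _ _ hid.
rewrite (hface w) // (hface r) // !mulr0 !addr0.
have qe0 := state_ge0 e.1 e.2 hq.
by apply; [|exact: ltW|exact: state_ge0|exact: ltW|lra|ring].
Qed.

Definition tangent (D : vec) :=
  (forall x, \sum_(a : outs A) D a x = 0) /\ no_signalling D.

Definition vertex_state (v : vec) :=
  is_state v /\ forall D, tangent D -> (forall a x, v a x = 0 -> D a x = 0) ->
    forall a x, D a x = 0.

Definition supp (v : vec) : {set entry} := [set k | v k.1 k.2 != 0].

Lemma tangent_opp (D : vec) : tangent D -> tangent (fun a x => - D a x).
Proof.
move=> [hD1 hDn]; split=> [x|i a x x' hx]; first by rewrite sumrN hD1 oppr0.
by rewrite !sumrN (hDn i a x x' hx).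
Qed.

Lemma tangent_neg_entry (D : vec) (a0 : outs A) (x0 : ins X) :
  tangent D -> 0 < D a0 x0 -> exists a, D a x0 < 0.
Proof.
move=> [hD1 _] hpos; apply: contrapT => /forallNP hn.
have hge a : 0 <= D a x0 by rewrite leNgt; apply/negP/hn.
have := hD1 x0; rewrite (bigD1 a0) //=.
have : 0 <= \sum_(a | a != a0) D a x0 by apply: sumr_ge0 => a _.
lra.
Qed.

Lemma shrink_support (p D : vec) (a0 : outs A) (x0 : ins X) :
  is_state p -> tangent D -> (forall a x, p a x = 0 -> D a x = 0) ->
  D a0 x0 < 0 ->
  exists t : R, [/\ 0 < t, is_state (fun a x => p a x + t * D a x) &
     (#|supp (fun a x => (p a x + t * D a x)%R)| < #|supp p|)%N].
Proof.
move=> [hp0 hp1 hpn] [hD1 hDn] hsub hneg.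
have [k Dk hk] := @arg_minP _ _ _ (a0, x0) (fun k : entry => D k.1 k.2 < 0)
   (fun k => p k.1 k.2 / - D k.1 k.2) hneg.
have pk0 : 0 < p k.1 k.2.
  by rewrite lt_def hp0 andbT; apply: contraTneq Dk => /hsub ->; rewrite ltxx.
pose t := p k.1 k.2 / - D k.1 k.2.
have t0 : 0 < t by rewrite divr_gt0 // oppr_gt0.
exists t; split=> //.
- split=> [a x|x|i a x x' hx].
  + case: (lerP 0 (D a x)) => hDa; first by rewrite addr_ge0 // mulr_ge0 // ltW.
    have nD : 0 < - D a x by rewrite oppr_gt0.
    have := hk (a, x) hDa; rewrite /= -(ler_pM2r nD) divfK ?gt_eqF // mulrN -/t.
    lra.
  + by rewrite big_split /= -mulr_sumr hp1 hD1 mulr0 addr0.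
  + by rewrite !big_split /= -!mulr_sumr (hpn i a x x' hx) (hDn i a x x' hx).
- apply: proper_card; apply/properP; split.
    apply/subsetP => j; rewrite !inE; apply: contra => /eqP h.
    by rewrite h (hsub _ _ h) mulr0 addr0.
  exists k; rewrite !inE; first by rewrite gt_eqF.
  have Dk0 : D k.1 k.2 != 0 by rewrite lt_eqF.
  by rewrite negbK /t invrN mulrN mulNr divfK // subrr.
Qed.

Lemma non_vertex_split (p : vec) : is_state p -> ~ vertex_state p ->
  exists (q1 q2 : vec) (l : R), [/\ is_state q1, is_state q2, 0 <= l <= 1,
    (#|supp q1| < #|supp p|)%N && (#|supp q2| < #|supp p|)%N & p = mix l q1 q2].
Proof.
move=> hp hnv.
have [D [hD hs [a0 [x0 hD0]]]] : exists D, [/\ tangent D,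
    (forall a x, p a x = 0 -> D a x = 0) & exists a x, D a x != 0].
  apply: contrapT => hn; apply: hnv; split=> // D hD hs a x; apply: contrapT => hDa.
  by apply: hn; exists D; split=> //; exists a, x; apply/eqP.
have [[a1 ha1] [a2 ha2]] : (exists a, D a x0 < 0) /\ (exists a, - D a x0 < 0).
  case: (ltgtP (D a0 x0) 0) => h.
  - split; first by exists a0.
    by apply: (tangent_neg_entry (a0 := a0) (tangent_opp hD)); rewrite oppr_gt0.
  - by split; [exact: tangent_neg_entry hD h|exists a0; rewrite oppr_lt0].
  - by rewrite h eqxx in hD0.
have hs' a x : p a x = 0 -> - D a x = 0 by move/hs ->; rewrite oppr0.
have [t2 [t2p q1s q1c]] := shrink_support hp hD hs ha1.
have [t1 [t1p q2s q2c]] := shrink_support hp (tangent_opp hD) hs' ha2.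
exists (fun a x => p a x + t2 * D a x), (fun a x => p a x + t1 * - D a x).
exists (t1 / (t1 + t2)); split=> //.
- by rewrite divr_ge0 ?ler_pdivrMr ?mul1r ?addr_gt0 //=; lra.
- by rewrite q1c q2c.
apply: funext => a; apply: funext => x; rewrite /mix; field.
by rewrite gt_eqF ?addr_gt0.
Qed.

Lemma effect_lower_bound (mu : vec -> R) (e : entry) (c : R) :
  is_effect mu -> (forall v, vertex_state v -> c * v e.1 e.2 <= mu v) ->
  forall p, is_state p -> c * p e.1 e.2 <= mu p.
Proof.
move=> hmu hv p.
suff H N : forall p, (#|supp p| < N)%N -> is_state p -> c * p e.1 e.2 <= mu p.
  exact: H _ p (ltnSn _).
elim: N => // N IH {}p; rewrite ltnS => hN hp.
have [|nvp] := pselect (vertex_state p); first exact: hv.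
have [q1 [q2 [l [hq1 hq2 /andP[l0 l1] /andP[lt1 lt2] ->]]]] := non_vertex_split hp nvp.
rewrite (effect_mix hmu) ?l0 ?l1 // /mix mulrDr (mulrCA c l) (mulrCA c (1 - l)).
apply: lerD; apply: ler_wpM2l; rewrite ?subr_ge0 //; apply: IH => //.
  exact: leq_trans lt1 hN.
exact: leq_trans lt2 hN.
Qed.

Lemma vertex_eq_of_supp (v w : vec) :
  vertex_state v -> vertex_state w -> supp v = supp w -> v = w.
Proof.
move=> [[_ hv1 hvn] hvb] [[_ hw1 hwn] _] hs.
have hD : tangent (fun a x => v a x - w a x).
  split=> [x|i a x x' hx]; first by rewrite sumrB hv1 hw1 subrr.
  by rewrite !sumrB (hvn i a x x' hx) (hwn i a x x' hx).
have hsub a x : v a x = 0 -> v a x - w a x = 0.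
  move=> h; have : (a, x) \notin supp w by rewrite -hs inE /= h eqxx.
  by rewrite inE /= negbK h => /eqP ->; rewrite subrr.
apply: funext => a; apply: funext => x.
by apply/eqP; rewrite -subr_eq0; apply/eqP; apply: hvb hD hsub a x.
Qed.

Lemma vertex_lower_bound (mu : vec -> R) (e : entry) :
  is_effect mu -> (forall z, is_state z -> mu z = 0 -> z e.1 e.2 = 0) ->
  exists c, 0 < c /\ forall v, vertex_state v -> c * v e.1 e.2 <= mu v.
Proof.
move=> hmu hker.
suff [c [c0 hc]] : exists c, 0 < c /\ forall (S : {set entry}) v,
    vertex_state v -> supp v = S -> c * v e.1 e.2 <= mu v.
  by exists c; split=> // v hv; exact: hc.
apply: (common_pos_bound (P := fun S c => forall v,
  vertex_state v -> supp v = S -> c * v e.1 e.2 <= mu v)) => S.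
have [[v0 [hv0 hs0 v0e]]|none] :=
  pselect (exists v, [/\ vertex_state v, supp v = S & 0 < v e.1 e.2]).
  have mu0 : 0 < mu v0.
    rewrite lt_def effect_ge0 ?andbT //; last by case: hv0.
    by apply: contraTneq v0e => /(hker v0 (proj1 hv0)) ->; rewrite ltxx.
  exists (mu v0 / v0 e.1 e.2); split=> [|c /andP[c0 cle] v hv hs]; first by rewrite divr_gt0.
  have -> : v = v0 by apply: vertex_eq_of_supp; rewrite // hs hs0.
  by rewrite -(ler_pM2r v0e) divfK ?gt_eqF in cle.
exists 1; split=> // c _ v hv hs.
have -> : v e.1 e.2 = 0.
  apply/eqP; rewrite eq_le state_ge0 ?andbT; last by case: hv.
  by rewrite leNgt; apply/negP => ve; apply: none; exists v.
by rewrite mulr0 effect_ge0 //; case: hv.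
Qed.

Lemma effect_vanishes_of_positive_kernel (mu : vec -> R) (z : vec) :
  is_effect mu -> is_state z -> mu z = 0 -> (forall a x, 0 < z a x) ->
  forall p, is_state p -> mu p = 0.
Proof.
move=> hmu hz muz zpos p hp.
have [c [c0 hc]] := pos_lower_bound (fun k : entry => z k.1 k.2).
(* [z] dominates [t * p], so it is a proper mixture of [p] and a state [q]. *)
pose t := c / (1 + c).
have t0 : 0 < t by rewrite divr_gt0 ?addr_gt0.
have tc : t * (1 + c) = c by rewrite divfK ?gt_eqF ?addr_gt0.
have t1 : t < 1 by nra.
have t1_neq0 : 1 - t != 0 by rewrite subr_eq0 gt_eqF.
pose q : vec := fun a x => (1 - t)^-1 * z a x + (- t / (1 - t)) * p a x.
have hq : is_state q.
  apply: state_lin => // [|a x]; first by field.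
  have -> : (1 - t)^-1 * z a x + - t / (1 - t) * p a x = (z a x - t * p a x) / (1 - t).
    by field.
  rewrite divr_ge0 ?subr_ge0 ?ltW //.
  have := hc (a, x) (zpos a x); have := state_le1 a x hp; have := state_ge0 a x hp.
  rewrite /=; nra.
have zE : z = mix t p q.
  by apply: funext => a; apply: funext => x; rewrite /mix /q; field.
have t01 : 0 <= t <= 1 by rewrite !ltW.
have := effect_mix hmu hp hq t01; rewrite -zE muz.
have := effect_ge0 hmu hp; have := effect_ge0 hmu hq; nra.
Qed.

(* [e0] only witnesses that the type of entries is inhabited. *)
Lemma effect_kernel_entry (mu : vec -> R) (e0 : entry) :
  is_effect mu -> (exists p, is_state p /\ mu p != 0) ->
  exists e : entry, forall z, is_state z -> mu z = 0 -> z e.1 e.2 = 0.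
Proof.
move=> hmu [p [hp mup]]; apply: contrapT => /forallNP hne.
have kernel_pos k : exists z, (is_state z /\ mu z = 0) /\ 0 < z k.1 k.2.
  apply: contrapT => hn; apply: (hne k) => z hz muz; apply: contrapT => zk.
  by apply: hn; exists z; rewrite lt_def state_ge0 // andbT; split=> //; apply/eqP.
have [w [[hw muw] wpos]] : exists w : vec,
    (is_state w /\ mu w = 0) /\ forall k : entry, True -> 0 < w k.1 k.2.
  apply: convex_positive_witness => [z []//|z1 z2 [h1 m1] [h2 m2]||k _].
  - have h : 0 <= (2^-1 : R) <= 1 by apply/andP; split; lra.
    by rewrite effect_mix // m1 m2; split; [exact: state_mix|ring].
  - by have [z [Cz _]] := kernel_pos e0; exists z.
  - exact: kernel_pos.
move/eqP: mup; apply.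
exact: effect_vanishes_of_positive_kernel hmu hw muw (fun a x => wpos (a, x) I) p hp.
Qed.

Lemma effect_entry_lower_bound (mu : vec -> R) (e0 : entry) :
  is_effect mu -> (exists p, is_state p /\ mu p != 0) ->
  exists (e : entry) (c : R), 0 < c /\ forall p, is_state p -> c * p e.1 e.2 <= mu p.
Proof.
move=> hmu hnz; have [e hker] := effect_kernel_entry e0 hmu hnz.
have [c [c0 hc]] := vertex_lower_bound hmu hker.
by exists e, c; split=> //; apply: effect_lower_bound hmu hc.
Qed.

Definition entry_vec (a : outs A) (x : ins X) (m : R) : vec :=
  fun b y => if (b, y) == (a, x) then m else 0.

Lemma pairing_one_entry (p Rv : vec) (a : outs A) (x : ins X) :
  (forall a' x', (a', x') != (a, x) -> Rv a' x' = 0) ->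
  \sum_(a' : outs A) \sum_(x' : ins X) p a' x' * Rv a' x' = p a x * Rv a x.
Proof.
move=> h; rewrite (bigD1 a) //= (bigD1 x) //= big1 ?addr0 => [|x' xx].
  rewrite big1 ?addr0 // => a' aa; apply: big1 => x' _.
  by rewrite h ?mulr0 // xpair_eqE negb_and aa.
by rewrite h ?mulr0 // xpair_eqE negb_and xx orbT.
Qed.

Lemma entry_vec_represents (mu : vec -> R) a x m :
  (forall p, is_state p -> mu p = p a x * m) -> represents mu (entry_vec a x m).
Proof.
move=> hmu p hp; rewrite hmu // (pairing_one_entry _ (a := a) (x := x)).
  by rewrite /entry_vec eqxx.
by move=> a' x' /negbTE; rewrite /entry_vec => ->.
Qed.

Lemma entry_vec_one_entry a x m : 0 < m <= 1 -> one_entry_vec (entry_vec a x m).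
Proof.
move=> /andP[m0 m1]; exists a, x; rewrite /entry_vec eqxx ltW ?gt_eqF //.
by split=> // a' x' /negbTE ->.
Qed.

Lemma entry_effect_below (mu : vec -> R) (e : entry) (c : R) :
  is_effect mu -> 0 <= c -> (forall p, is_state p -> c * p e.1 e.2 <= mu p) ->
  is_effect (fun p => c * p e.1 e.2).
Proof.
move=> [hmu _] c0 hle; split=> [p hp|p q t _ _ _]; last by rewrite /=; ring.
have /andP[_ mu1] := hmu p hp.
by rewrite mulr_ge0 ?(state_ge0 _ _ hp) //=; apply: le_trans (hle p hp) mu1.
Qed.

End States.

Arguments const_det {R n X A} a.
Arguments const_det_state {R n X A} a.

Section Measurements.
Variables (R : realType) (n : nat) (X A : 'I_n -> finType) (O : finType).
Local Notation vec := (boxvec R X A).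
Variable mu : O -> vec -> R.

Definition split_outcome (r : O) (nu : vec -> R) (s : O + unit) : vec -> R :=
  match s with
  | inl r' => if r' == r then fun p => mu r p - nu p else mu r'
  | inr _ => nu
  end.

Definition unsplit (r : O) (s : O + unit) : O := if s is inl r' then r' else r.

Lemma split_outcome_measurement (r : O) (nu : vec -> R) :
  is_measurement mu -> is_effect nu -> (forall p, is_state p -> nu p <= mu r p) ->
  is_measurement (split_outcome r nu).
Proof.
move=> [hmeff hmsum] hnu hle; split=> [[r'|[]] /=|p hp].
- case: ifP => _; last exact: hmeff.
  have [hb hmix] := hmeff r; have [hnb hnmix] := hnu.
  split=> [p hp|p q t hp hq ht]; last by rewrite hmix ?hnmix //; ring.
  have := hb p hp; have := hnb p hp; have := hle p hp; move=> /= h1 /andP[h2 _] /andP[_ h3].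
  by apply/andP; split; lra.
- exact: hnu.
- rewrite big_sumType /= sum_unit -(hmsum p hp) [in RHS](bigD1 r) //= (bigD1 r) //= eqxx.
  rewrite (eq_bigr (mu ^~ p)) => [|r' /negbTE]; last by rewrite /= => ->.
  by ring.
Qed.

Lemma split_outcome_refines (r : O) (nu : vec -> R) :
  refines_via mu (split_outcome r nu) (unsplit r).
Proof.
move=> r' p hp; rewrite big_sumType /= (big_pred1 r') //=.
case: (eqVneq r r') => [<-|_]; first by rewrite sum_unit; ring.
by rewrite big_pred0_eq addr0.
Qed.

Lemma refines_via_le (S : finType) (nu : S -> vec -> R) (f : S -> O) s p :
  refines_via mu nu f -> (forall s, is_effect (nu s)) -> is_state p ->
  nu s p <= mu (f s) p.
Proof.
move=> href hnu hp; rewrite (href (f s) p hp) (bigD1 s) //= lerDl.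
by apply: sumr_ge0 => s' _; apply: effect_ge0.
Qed.

Lemma one_entry_max_informative :
  (forall r, exists Rv, represents (mu r) Rv /\ one_entry_vec Rv) ->
  max_informative mu.
Proof.
move=> hrep S nu f [hnu _] href s.
have [Rv [hRv [a [x [Rv0 _ Rv_zero]]]]] := hrep (f s).
have mu_fs p : is_state p -> mu (f s) p = p a x * Rv a x.
  by move=> hp; rewrite hRv // (pairing_one_entry _ Rv_zero).
have face z : is_state z -> z (a, x).1 (a, x).2 = 0 -> nu s z = 0.
  move=> hz /= za; apply/eqP; rewrite eq_le effect_ge0 // andbT.
  by rewrite -[0](mul0r (Rv a x)) -za -mu_fs // refines_via_le.
exists (nu s (const_det a) / Rv a x) => p hp.
have := face_effect_proportional (hnu s) face hp (const_det_state a).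
rewrite /= const_det_at mul1r => ->.
by rewrite mu_fs //; field.
Qed.

Lemma max_informative_one_entry (e0 : outs A * ins X) :
  is_measurement mu -> (forall r, exists p, is_state p /\ mu r p != 0) ->
  max_informative mu ->
  forall r, exists Rv, represents (mu r) Rv /\ one_entry_vec Rv.
Proof.
move=> hm hnz hmax r; have hmu := hm.1 r.
have [[a x] [c [c0 hc]]] := effect_entry_lower_bound e0 hmu (hnz r).
have [k hk] := hmax _ _ _ (split_outcome_measurement hm
  (entry_effect_below hmu (ltW c0) hc) hc) (split_outcome_refines r _) (inr tt).
have hk' p (hp : is_state p) : c * p a x = k * mu r p := hk p hp.
pose m := mu r (const_det a).
have ckm : c = k * m by have := hk' _ (const_det_state a); rewrite const_det_at mulr1.
have k0 : k != 0 by apply: contraTneq c0 => k_eq0; rewrite ckm k_eq0 mul0r ltxx.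
have m0 : 0 < m.
  have m_ge0 : 0 <= m := effect_ge0 hmu (const_det_state a).
  rewrite lt_def m_ge0 andbT.
  by apply: contraTneq c0 => m_eq0; rewrite ckm m_eq0 mulr0 ltxx.
exists (entry_vec a x m); split.
  apply: entry_vec_represents => p hp; apply: (mulfI k0).
  by rewrite -hk' // ckm; ring.
by apply: entry_vec_one_entry; rewrite m0; case/andP: (hmu.1 _ (const_det_state a)).
Qed.

End Measurements.

Theorem lemma3 (R : realType) (n : nat) (X A : 'I_n -> finType)
    (hX : forall i : 'I_n, (0 < #|X i|)%N) (hA : forall i : 'I_n, (0 < #|A i|)%N)
    (O : finType) (mu : O -> boxvec R X A -> R) :
  is_measurement mu ->
  (forall r : O, exists p : boxvec R X A, is_state p /\ mu r p != 0) ->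
  (max_informative mu <->
   forall r : O, exists Rv : boxvec R X A, represents (mu r) Rv /\ one_entry_vec Rv).
Proof.
move=> hm hnz.
pose e0 : outs A * ins X :=
  ([ffun i => xchoose (card_gt0P (hA i))], [ffun i => xchoose (card_gt0P (hX i))]).
split; first exact: max_informative_one_entry e0 hm hnz.
exact: one_entry_max_informative.
Qed.
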